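(* For every graph $H$ there exists a positive real number $c=c(H)$ such that the following holds. Let $Q$ be a quasi-order, let $f_H$ be a legal $Q$-labelling of $H$, let $\mathcal G$ be a hereditary class of legal $Q$-labelled graphs, and let $\mathcal H$ be a consistent set of homomorphisms from $(H,f_H)$ to $\mathcal G$. Then there are infinitely many positive integers $n$ such that $$\mathrm{ex}(H,f_H,\mathcal H,\mathcal G,n)\ \ge\ c\,n^{\mathrm{dup}_{\mathcal H}(H,f_H,\mathcal G)}.$$
   Context: All graphs are finite and simple. A separation of a graph $G$ is an ordered pair $(A,B)$ of subsets of $V(G)$ with $A\cup B=V(G)$ such that no edge of $G$ joins $A\setminus B$ and $B\setminus A$; its order is $|A\cap B|$. A collection $\mathcal C$ of separations of $G$ is independent if $A\setminus B\neq\emptyset$ for every $(A,B)\in\mathcal C$ and, for any distinct $(A,B),(C,D)\in\mathcal C$, $A\subseteq D$ and $C\subseteq B$. For $S\subseteq V(G)$, $N_G[S]$ is the set of vertices that are in $S$ or adjacent to a vertex of $S$. Labelled graphs. A march in $G$ is a finite sequence of pairwise distinct vertices of $G$. A labelling of $G$ is a function whose domain is a set of marches in $G$; it is legal if for every march in its domain, the entries form a clique of $G$. A quasi-order is a pair $Q=(X,\preceq)$ with $\preceq$ a reflexive and transitive relation on $X$. A $Q$-labelled graph is a pair $(G,f_G)$ where $f_G$ is a labelling of $G$ with image contained in $X$; it is legal if $f_G$ is legal. For a function $\phi$ and a march $m=(m_1,\dots,m_n)$, $\phi(m)=(\phi(m_1),\dots,\phi(m_n))$. An isomorphism from $(H,f_H)$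 to $(G,f_G)$ is a graph isomorphism $\phi:V(H)\to V(G)$ such that for each march $m$ in the domain of $f_H$, $\phi(m)$ is in the domain of $f_G$ and $f_H(m)=f_G(\phi(m))$, and for each march $m'$ in the domain of $f_G$, $\phi^{-1}(m')$ is in the domain of $f_H$. $(H,f_H)$ is an induced subgraph of $(G,f_G)$ if $H$ is an induced subgraph of $G$, the domain of $f_H$ is contained in that of $f_G$, and every march in the domain of $f_G$ with all entries in $V(H)$ is in the domain of $f_H$ and has the same value under $f_H$ and $f_G$. A class of $Q$-labelled graphs is hereditary if it contains every induced subgraph of each of its members. $(H',f_{H'})$ is a subgraph of $(G,f_G)$ if $H'$ is a subgraph of $G$, the domain of $f_{H'}$ is contained in that of $f_G$, and $f_{H'}(m)=f_G(m)$ for every $m$ in the domain of $f_{H'}$; it is spanning if moreover $V(H')=V(G)$. A homomorphism from a legal $Q$-labelled graph $(H,f_H)$ to a $Q$-labelled graph $(G,f_G)$ is a graph homomorphism $\phi:V(H)\to V(G)$ such that for every march $m$ in the domain of $f_H$, $\phi(m)$ is in the domain of $f_G$ and $f_H(m)\preceq f_G(\phi(m))$. A set of homomorphisms from $(H,f_H)$ to a class $\mathcal G$ is a set each of whose members is a homomorphism from $(H,f_H)$ to some member of $\mathcal G$ (each homomorphism being regarded as a function with specified codomain). Consistency. Let $\mathcal G$ be a hereditary class of legal $Q$-labelled graphs and $\mathcal H$ a set of homomorphisms from a legal $Q$-labelled graph $(H,f_H)$ to $\mathcal G$. $\mathcal H$ is consistent if: (CON1) for every $\phi\in\mathcal H$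 from $(H,f_H)$ to $(G,f)\in\mathcal G$: if $(G',f')$ is an induced subgraph of $(G,f)$ with $\phi(V(H))\subseteq V(G')$, then $\phi$ with codomain restricted to $V(G')$ is a homomorphism to $(G',f')$ belonging to $\mathcal H$; and if $(G,f)$ is an induced subgraph of some $(G',f')\in\mathcal G$, then $\phi$ with codomain changed to $V(G')$ is a homomorphism to $(G',f')$ belonging to $\mathcal H$; (CON2) if $\iota$ is an isomorphism from $(G_1,f_1)\in\mathcal G$ to $(G_2,f_2)\in\mathcal G$ and $\phi\in\mathcal H$ is a homomorphism to $(G_1,f_1)$, then $\iota\circ\phi\in\mathcal H$; (CON3) if $(G_1,f_1),(G_2,f_2)\in\mathcal G$, $\iota$ is an isomorphism from $(G_2,f_2)$ to a spanning subgraph $(G_1',f_1')$ of $(G_1,f_1)$, and $\phi\in\mathcal H$ is a homomorphism to $(G_1,f_1)$ that is also a homomorphism to $(G_1',f_1')$, then $\iota^{-1}\circ\phi$ is a homomorphism from $(H,f_H)$ to $(G_2,f_2)$ and belongs to $\mathcal H$. Counting. $\mathrm{ex}(H,f_H,\mathcal H,\mathcal G,n)$ is the maximum, over all $(G,f_G)\in\mathcal G$ with $|V(G)|=n$, of the number of members of $\mathcal H$ that are homomorphisms from $(H,f_H)$ to $(G,f_G)$. Duplication. For a labelled graph $(H,f_H)$, an independent collection $\mathcal L$ of separations of $H$ and a positive integer $w$, $(H,f_H)\wedge_w\mathcal L$ is the labelled graph $(G,f_G)$ obtained from $w$ disjoint isomorphic copies $(G_1,f_{G_1}),\dots,(G_w,f_{G_w})$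 of $(H,f_H)$ by identifying, for each $v\in\bigcap_{(A,B)\in\mathcal L}B$, the $w$ copies of $v$ into a single vertex $v^G$; the domain of $f_G$ consists exactly of the marches $m^G$, where $m$ is a march in the domain of some $f_{G_i}$ and $m^G$ is obtained from $m$ by replacing each entry that is a copy of such a $v$ by $v^G$, and $f_G(m^G)=f_{G_i}(m)$. $\mathcal L$ is $\mathcal G$-duplicable if $(H,f_H)\wedge_k\mathcal L\in\mathcal G$ for infinitely many positive integers $k$. $\mathcal L$ is $(\mathcal G,\mathcal H)$-duplicable if there exist a $Q$-labelled graph $(G,f_G)$ and an onto homomorphism $\phi\in\mathcal H$ from $(H,f_H)$ to $(G,f_G)$ such that $\phi(A\setminus B)\cap\phi(B)=\emptyset$ for every $(A,B)\in\mathcal L$, and $\{(N_G[\phi(A\setminus B)],V(G)\setminus\phi(A\setminus B)):(A,B)\in\mathcal L\}$ is a $\mathcal G$-duplicable independent collection of separations of $(G,f_G)$ of size $|\mathcal L|$. $\mathrm{dup}_{\mathcal H}(H,f_H,\mathcal G)$ is the maximum size of a $(\mathcal G,\mathcal H)$-duplicable independent collection of separations of $H$. *)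

From Stdlib Require Import Reals.
From mathcomp Require Import all_boot.
From mathcomp Require Import finmap.

Set Implicit Arguments.
Unset Strict Implicit.
Unset Printing Implicit Defensive.

Local Open Scope fset_scope.

Definition quasi_order (X : Type) (le : X -> X -> Prop) : Prop :=
  (forall x, le x x) /\ (forall x y z, le x y -> le y z -> le x z).

(* The fixed graph H: vertex set = the whole finite type VH,           *)
Definition simple_graph (VH : finType) (E : rel VH) : Prop :=
  symmetric E /\ irreflexive E.

(* A labelling of H is a partial function on sequences of vertices;   *)
(* its domain {m | fH m <> None} must consist of marches (sequences of *)
(* pairwise distinct vertices); legal = every march in the domain is a *)
(* clique.                                                            *)
Definition legal_H_labelling (VH : finType) (E : rel VH) (X : Type)
  (fH : seq VH -> option X) : Prop :=
  forall m, fH m <> None ->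
    uniq m /\ (forall x y, x \in m -> y \in m -> x != y -> E x y).

Record lgraph (V : choiceType) (X : Type) := LGraph {
  lverts : {fset V};
  ladj : rel V;
  llab : seq V -> option X }.

Definition wf_lgraph (V : choiceType) (X : Type) (G : lgraph V X) : Prop :=
  [/\ symmetric (ladj G), irreflexive (ladj G),
      (forall x y, ladj G x y -> (x \in lverts G) && (y \in lverts G)) &
      (forall m, llab G m <> None ->
         uniq m /\ all (fun x => x \in lverts G) m)].

Definition legal_lgraph (V : choiceType) (X : Type) (G : lgraph V X) : Prop :=
  forall m, llab G m <> None ->
    forall x y, x \in m -> y \in m -> x != y -> ladj G x y.

Definition induced (V : choiceType) (X : Type) (G' G : lgraph V X) : Prop :=
  [/\ lverts G' `<=` lverts G,
      (forall x y, x \in lverts G' -> y \in lverts G' ->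
         ladj G' x y = ladj G x y),
      (forall m, llab G' m <> None -> llab G m <> None) &
      (forall m, all (fun x => x \in lverts G') m -> llab G m <> None ->
         llab G' m = llab G m)].

Definition subgraph (V : choiceType) (X : Type) (G' G : lgraph V X) : Prop :=
  [/\ lverts G' `<=` lverts G,
      (forall x y, ladj G' x y -> ladj G x y) &
      (forall m, llab G' m <> None -> llab G m = llab G' m)].

Definition spanning_subgraph (V : choiceType) (X : Type) (G' G : lgraph V X)
  : Prop := subgraph G' G /\ lverts G' = lverts G.

Definition is_iso (V1 V2 : choiceType) (X : Type)
  (G1 : lgraph V1 X) (G2 : lgraph V2 X) (iota : V1 -> V2) : Prop :=
  [/\ {in lverts G1 &, injective iota},
      (forall x, x \in lverts G1 -> iota x \in lverts G2),
      (forall y, y \in lverts G2 -> exists2 x, x \in lverts G1 & iota x = y),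
      (forall x y, x \in lverts G1 -> y \in lverts G1 ->
         ladj G2 (iota x) (iota y) = ladj G1 x y) &
      ((forall m, llab G1 m <> None -> llab G2 (map iota m) = llab G1 m) /\
       (forall m', llab G2 m' <> None ->
          exists m, [/\ all (fun x => x \in lverts G1) m, map iota m = m'
                      & llab G1 m <> None]))].

Definition is_hom (VH : finType) (E : rel VH) (X : Type)
  (le : X -> X -> Prop) (fH : seq VH -> option X)
  (V : choiceType) (G : lgraph V X) (phi : {ffun VH -> V}) : Prop :=
  [/\ (forall x, phi x \in lverts G),
      (forall x y, E x y -> ladj G (phi x) (phi y)) &
      (forall m a, fH m = Some a ->
         exists2 b, llab G (map phi m) = Some b & le a b)].

Definition hereditary_class (V : choiceType) (X : Type)
  (GG : lgraph V X -> Prop) : Prop :=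
  (forall G, GG G -> wf_lgraph G /\ legal_lgraph G) /\
  (forall G G', GG G -> wf_lgraph G' -> induced G' G -> GG G').

(* A set HH of homomorphisms from (H,fH) to the class GG: HH G phi     *)
(* means "phi, regarded as a map with codomain (G,f), belongs to HH". *)
Definition hom_set (VH : finType) (E : rel VH) (X : Type)
  (le : X -> X -> Prop) (fH : seq VH -> option X) (V : choiceType)
  (GG : lgraph V X -> Prop) (HH : lgraph V X -> {ffun VH -> V} -> Prop)
  : Prop :=
  forall G phi, HH G phi -> GG G /\ is_hom E le fH G phi.

Definition consistent (VH : finType) (E : rel VH) (X : Type)
  (le : X -> X -> Prop) (fH : seq VH -> option X) (V : choiceType)
  (GG : lgraph V X -> Prop) (HH : lgraph V X -> {ffun VH -> V} -> Prop)
  : Prop :=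
  (* CON1, restriction of the codomain *)
  (forall (G G' : lgraph V X) phi, HH G phi -> wf_lgraph G' ->
     induced G' G -> (forall x, phi x \in lverts G') ->
     is_hom E le fH G' phi /\ HH G' phi) /\
  (* CON1, extension of the codomain *)
  (forall (G G' : lgraph V X) phi, HH G phi -> GG G' -> induced G G' ->
     is_hom E le fH G' phi /\ HH G' phi) /\
  (* CON2 *)
  (forall (G1 G2 : lgraph V X) (iota : V -> V) phi,
     GG G1 -> GG G2 -> is_iso G1 G2 iota -> HH G1 phi ->
     HH G2 [ffun x => iota (phi x)]) /\
  (* CON3: chi is iota^{-1} o phi *)
  (forall (G1 G2 G1' : lgraph V X) (iota : V -> V) phi,
     GG G1 -> GG G2 -> wf_lgraph G1' -> spanning_subgraph G1' G1 ->
     is_iso G2 G1' iota -> HH G1 phi -> is_hom E le fH G1' phi ->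
     forall chi : {ffun VH -> V},
       (forall x, chi x \in lverts G2 /\ iota (chi x) = phi x) ->
       is_hom E le fH G2 chi /\ HH G2 chi).

Definition num_homs (VH : finType) (V : choiceType) (X : Type)
  (HH : lgraph V X -> {ffun VH -> V} -> Prop) (G : lgraph V X) (k : nat)
  : Prop :=
  exists S : {fset {ffun VH -> V}},
    (forall phi, phi \in S <-> HH G phi) /\ #|` S| = k.

Definition ex_val (VH : finType) (V : choiceType) (X : Type)
  (GG : lgraph V X -> Prop) (HH : lgraph V X -> {ffun VH -> V} -> Prop)
  (n e : nat) : Prop :=
  (exists G, [/\ GG G, #|` lverts G| = n & num_homs HH G e]) /\
  (forall G k, GG G -> #|` lverts G| = n -> num_homs HH G k -> (k <= e)%N).

Definition separation (W : choiceType) (X : Type) (K : lgraph W X)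
  (AB : {fset W} * {fset W}) : Prop :=
  AB.1 `|` AB.2 = lverts K /\
  (forall x y, x \in AB.1 `\` AB.2 -> y \in AB.2 `\` AB.1 -> ~~ ladj K x y).

Definition indep_coll (W : choiceType) (X : Type) (K : lgraph W X)
  (L : {fset ({fset W} * {fset W})}) : Prop :=
  (forall AB, AB \in L -> separation K AB /\ AB.1 `\` AB.2 != fset0) /\
  (forall AB CD, AB \in L -> CD \in L -> AB != CD ->
     AB.1 `<=` CD.2 /\ CD.1 `<=` AB.2).

Definition H_separation (VH : finType) (E : rel VH)
  (AB : {set VH} * {set VH}) : Prop :=
  AB.1 :|: AB.2 = setT /\
  (forall x y, x \in AB.1 :\: AB.2 -> y \in AB.2 :\: AB.1 -> ~~ E x y).

Definition H_indep_coll (VH : finType) (E : rel VH)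
  (L : {set ({set VH} * {set VH})}) : Prop :=
  (forall AB, AB \in L -> H_separation E AB /\ AB.1 :\: AB.2 != set0) /\
  (forall AB CD, AB \in L -> CD \in L -> AB != CD ->
     AB.1 \subset CD.2 /\ CD.1 \subset AB.2).

(* Duplication (K,fK) /\_w L.  Copy k (k < w) of a vertex v is (v,k), *)
(* except that the vertices of the core (the intersection of the B's) *)
(* are shared: their copies are all (v,0).  Convention: the           *)
(* intersection over the empty collection is empty.    *)
Definition dup_core (W : choiceType) (X : Type) (K : lgraph W X)
  (L : {fset ({fset W} * {fset W})}) : {fset W} :=
  [fset v in lverts K | (L != fset0) && all (fun AB => v \in AB.2) L].

Definition dcopy (W : choiceType) (C : {fset W}) (k : nat) (v : W)
  : (W * nat)%type := (v, if v \in C then 0%N else k).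

Definition dup_graph (W : choiceType) (X : Type) (K : lgraph W X)
  (L : {fset ({fset W} * {fset W})}) (w : nat) : lgraph (W * nat)%type X :=
  let C := dup_core K L in
  @LGraph (W * nat)%type X
    (\big[fsetU/fset0]_(k < w) [fset dcopy C k v | v in lverts K])
    (fun a b => ladj K a.1 b.1 &&
       [exists k : 'I_w, (a == dcopy C k a.1) && (b == dcopy C k b.1)])
    (fun m => if [exists k : 'I_w, map (dcopy C k) (map fst m) == m]
              then llab K (map fst m) else None).

Definition G_duplicable (V : choiceType) (X : Type) (GG : lgraph V X -> Prop)
  (K : lgraph V X) (L : {fset ({fset V} * {fset V})}) : Prop :=
  forall N, exists k, (N < k)%N /\
    exists (G'' : lgraph V X) (iota : (V * nat)%type -> V),
      GG G'' /\ is_iso (dup_graph K L k) G'' iota.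

Definition fimg (VH : finType) (V : choiceType) (phi : {ffun VH -> V})
  (S : {set VH}) : {fset V} := [fset phi x | x in enum S].

Definition cnbhd (V : choiceType) (X : Type) (G : lgraph V X) (S : {fset V})
  : {fset V} :=
  S `|` [fset y in lverts G | has (fun x => ladj G x y) S].

Definition img_sep (VH : finType) (V : choiceType) (X : Type)
  (G : lgraph V X) (phi : {ffun VH -> V}) (AB : {set VH} * {set VH})
  : ({fset V} * {fset V})%type :=
  (cnbhd G (fimg phi (AB.1 :\: AB.2)), lverts G `\` fimg phi (AB.1 :\: AB.2)).

Definition img_coll (VH : finType) (V : choiceType) (X : Type)
  (G : lgraph V X) (phi : {ffun VH -> V}) (L : {set ({set VH} * {set VH})})
  : {fset ({fset V} * {fset V})} :=
  [fset img_sep G phi AB | AB in enum L].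

Definition GH_duplicable (VH : finType) (V : choiceType) (X : Type)
  (GG : lgraph V X -> Prop) (HH : lgraph V X -> {ffun VH -> V} -> Prop)
  (L : {set ({set VH} * {set VH})}) : Prop :=
  exists (G : lgraph V X) (phi : {ffun VH -> V}),
    [/\ HH G phi,
        (forall y, y \in lverts G -> exists x, phi x = y),
        (forall AB, AB \in L ->
           fimg phi (AB.1 :\: AB.2) `&` fimg phi AB.2 = fset0),
        indep_coll G (img_coll G phi L) &
        #|` img_coll G phi L| = #|L| /\ G_duplicable GG G (img_coll G phi L)].

Definition is_dup (VH : finType) (E : rel VH) (V : choiceType) (X : Type)
  (GG : lgraph V X -> Prop) (HH : lgraph V X -> {ffun VH -> V} -> Prop)
  (d : nat) : Prop :=
  (exists L, [/\ H_indep_coll E L, GH_duplicable GG HH L & #|L| = d]) /\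
  (forall L, H_indep_coll E L -> GH_duplicable GG HH L -> (#|L| <= d)%N).

From Stdlib Require Import Reals ClassicalEpsilon.
From mathcomp Require Import all_boot.
From mathcomp Require Import finmap.

Set Implicit Arguments.
Unset Strict Implicit.
Unset Printing Implicit Defensive.
Local Open Scope fset_scope.

(* With c = |V(H)|^(-|V(H)|), take a (GG,HH)-duplicable independent
   collection of d = dup_HH(H,fH,GG) separations of H.  It is witnessed by an
   onto homomorphism phi : H -> G in HH whose image collection L on G is
   independent, of size d, and GG-duplicable: for infinitely many w the graph
   G /\_w L is isomorphic to a member G'' of GG.  The private parts A \ B of
   the members of L are pairwise disjoint and pairwise non-adjacent, so for
   every choice s : L -> {0..w-1} of one copy per separation, sending each
   private part to its chosen copy (and everything else to copy 0) maps every
   clique into a single copy.  Hence this transversal copy of G is an induced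
   subgraph of G'' isomorphic to G, and CON2 + CON1 put the corresponding
   map H -> G'' into HH.  Different s give different maps (each private part
   meets the image of phi), so G'' carries w^d members of HH while it has
   n <= w |V(H)| vertices, whence ex(n) >= w^d >= c n^d. *)

Section IndependentParts.
Variables (W : choiceType) (X : Type) (K : lgraph W X).
Variable L : {fset ({fset W} * {fset W})}.
Hypothesis indL : indep_coll K L.

Lemma parts_disjoint P Q x :
  P \in L -> Q \in L -> x \in P.1 `\` P.2 -> x \in Q.1 `\` Q.2 -> P = Q.
Proof.
move=> PL QL; have [_ ind] := indL; case: (eqVneq P Q) => // nPQ.
have [PQ _] := ind P Q PL QL nPQ.
rewrite !in_fsetD => /andP[_ xP1] /andP[xQ2 _].
by move: (fsubsetP PQ x xP1); rewrite (negbTE xQ2).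
Qed.

Lemma parts_nonadjacent P Q x y :
  symmetric (ladj K) -> P \in L -> Q \in L ->
  x \in P.1 `\` P.2 -> y \in Q.1 `\` Q.2 -> ladj K x y -> P = Q.
Proof.
move=> symK PL QL; have [sep ind] := indL; case: (eqVneq P Q) => // nPQ.
have [PQ QP] := ind P Q PL QL nPQ; move=> xP yQ xy.
have xQ : x \in Q.2 `\` Q.1.
  move: xP; rewrite !in_fsetD => /andP[xP2 xP1].
  rewrite (fsubsetP PQ x xP1) andbT; apply/negP => /(fsubsetP QP).
  by rewrite (negbTE xP2).
have [[_ noedge] _] := sep Q QL.
by move: (noedge y x yQ xQ); rewrite symK xy.
Qed.

Lemma part_in_verts P v : P \in L -> v \in P.1 `\` P.2 -> v \in lverts K.
Proof.
move=> PL; rewrite in_fsetD => /andP[_ vP1].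
have [[covers _] _] := indL.1 P PL; by rewrite -covers in_fsetU vP1.
Qed.

Lemma in_dup_core v :
  (v \in dup_core K L) =
  [&& v \in lverts K, L != fset0 &
      all (fun AB : {fset W} * {fset W} => v \in AB.2) L].
Proof. by rewrite /dup_core !inE. Qed.

Lemma part_not_core P v : P \in L -> v \in P.1 `\` P.2 -> v \notin dup_core K L.
Proof.
move=> PL; rewrite in_fsetD in_dup_core => /andP[vP2 _].
apply/negP => /and3P[_ _ /allP /(_ P PL)]; by rewrite (negbTE vP2).
Qed.

Lemma not_core_in_part v :
  v \in lverts K -> v \notin dup_core K L -> L != fset0 ->
  exists P : L, v \in (val P).1 `\` (val P).2.
Proof.
move=> vK; rewrite in_dup_core vK => vC Ln0; rewrite Ln0 /= in vC.
have [P PL vP2] := allPn vC.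
have [[covers _] _] := indL.1 P PL.
exists [` PL] => /=; rewrite in_fsetD vP2 /=.
by move: vK; rewrite -covers in_fsetU (negbTE vP2) orbF.
Qed.

Lemma exists_noncore : lverts K != fset0 ->
  exists2 u, u \in lverts K & u \notin dup_core K L.
Proof.
move=> /fset0Pn [v vK]; case: (eqVneq L fset0) => [L0 | /fset0Pn [P PL]].
  by exists v => //; rewrite in_dup_core L0 eqxx andbF.
have [_ /fset0Pn [u uP]] := indL.1 P PL.
by exists u; [exact: part_in_verts PL uP | exact: part_not_core PL uP].
Qed.

End IndependentParts.

Section DuplicatedGraph.
Variables (W : choiceType) (X : Type) (K : lgraph W X).
Variable L : {fset ({fset W} * {fset W})}.

Lemma dup_vert w k v :
  v \in lverts K -> (k < w)%N -> dcopy (dup_core K L) k v \in lverts (dup_graph K L w).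
Proof.
move=> vK kw; apply/bigfcupP; exists (Ordinal kw); first by rewrite mem_index_enum.
by apply/imfsetP; exists v.
Qed.

Lemma dup_vert_inv w a :
  a \in lverts (dup_graph K L w) ->
  a.1 \in lverts K /\ exists2 k, (k < w)%N & a = dcopy (dup_core K L) k a.1.
Proof.
move=> /bigfcupP [k _ /imfsetP [v vK ->]] /=.
by split => //; exists k.
Qed.

Lemma dcopy_inj_index (C : {fset W}) k j v :
  v \notin C -> dcopy C k v = dcopy C j v -> k = j.
Proof. by rewrite /dcopy => /negbTE -> []. Qed.

End DuplicatedGraph.

Section Restriction.
Variables (V : choiceType) (X : Type).

Definition restrict (G : lgraph V X) (S : {fset V}) : lgraph V X :=
  LGraph S (fun a b => [&& ladj G a b, a \in S & b \in S])
    (fun m => if all (fun a => a \in S) m then llab G m else None).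

Lemma restrict_wf G S : wf_lgraph G -> wf_lgraph (restrict G S).
Proof.
case=> symG irrG _ labG; split => /=.
- by move=> a b; rewrite symG (andbC (a \in S)).
- by move=> a; rewrite irrG.
- by move=> a b /and3P[_ -> ->].
- by move=> m; case: ifP => // mS /labG [um _].
Qed.

Lemma restrict_induced G S : S `<=` lverts G -> induced (restrict G S) G.
Proof.
move=> SG; split => //=.
- by move=> x y xS yS; rewrite xS yS !andbT.
- by move=> m; case: ifP.
- by move=> m mS _; rewrite mS.
Qed.

End Restriction.

Section TransversalCopy.
Variables (W : choiceType) (X : Type) (K : lgraph W X).
Variable L : {fset ({fset W} * {fset W})}.
Hypotheses (wfK : wf_lgraph K) (indL : indep_coll K L).
Variables (w : nat) (s : {ffun L -> 'I_w}).
Hypothesis w_gt0 : (0 < w)%N.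

Let C := dup_core K L.

Definition copy_index (v : W) : nat :=
  if [pick P : L | v \in (val P).1 `\` (val P).2] is Some P then val (s P) else 0.

Definition transversal (v : W) : W * nat := dcopy C (copy_index v) v.

(* Private parts being disjoint, the selected copy is well defined. *)
Lemma copy_index_part (P : L) v :
  v \in (val P).1 `\` (val P).2 -> copy_index v = s P.
Proof.
move=> vP; rewrite /copy_index; case: pickP => [P' vP'|]; last by move/(_ P); rewrite vP.
suff -> : P' = P by [].
apply: val_inj; exact: (parts_disjoint indL (fsvalP P') (fsvalP P) vP' vP).
Qed.

Lemma copy_index_lt v : (copy_index v < w)%N.
Proof. by rewrite /copy_index; case: pickP => [P _|_]; [exact: ltn_ord | exact: w_gt0]. Qed.

Lemma transversal_vert v : v \in lverts K -> transversal v \in lverts (dup_graph K L w).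
Proof. by move=> vK; apply: dup_vert vK (copy_index_lt v). Qed.

(* The heart of the argument: the private parts being pairwise disjoint and
   non-adjacent, every clique of K lies inside a single copy. *)
Lemma clique_in_one_copy (m : seq W) :
  all (fun x => x \in lverts K) m ->
  (forall x y, x \in m -> y \in m -> x != y -> ladj K x y) ->
  exists k : 'I_w, {in m, forall x, transversal x = dcopy C k x}.
Proof.
move=> mK clique; have [symK _ _ _] := wfK.
case: (boolP (has (fun x => [exists P : L, x \in (val P).1 `\` (val P).2]) m)).
- move=> /hasP [x0 x0m /existsP [P0 x0P0]]; exists (s P0) => x xm.
  rewrite /transversal /dcopy; case: (boolP (x \in C)) => // xC.
  have Ln0 : L != fset0 by apply/fset0Pn; exists (val P0); exact: fsvalP.
  have [P xP] := not_core_in_part indL (allP mK x xm) xC Ln0.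
  rewrite (copy_index_part xP); suff -> : P = P0 by [].
  apply: val_inj; case: (eqVneq x x0) => [ex | nxx0].
    by rewrite ex in xP; exact: (parts_disjoint indL (fsvalP P) (fsvalP P0) xP x0P0).
  have xx0 := clique x x0 xm x0m nxx0.
  exact: (parts_nonadjacent indL symK (fsvalP P) (fsvalP P0) xP x0P0 xx0).
- move=> /hasPn noPart; exists (Ordinal w_gt0) => x xm.
  rewrite /transversal /copy_index; case: pickP => // P xP.
  by move: (noPart x xm) => /existsP; case; exists P.
Qed.

Lemma transversal_adj x y :
  x \in lverts K -> y \in lverts K ->
  ladj (dup_graph K L w) (transversal x) (transversal y) = ladj K x y.
Proof.
move=> xK yK; rewrite /= /transversal /=; case: (boolP (ladj K x y)) => //= xy.
have [symK _ _ _] := wfK.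
have pairK : all (fun a => a \in lverts K) [:: x; y] by rewrite /= xK yK.
have pair_clique a b : a \in [:: x; y] -> b \in [:: x; y] -> a != b -> ladj K a b.
  by rewrite !inE => /orP[]/eqP-> /orP[]/eqP->; rewrite ?eqxx // symK.
have [k onek] := clique_in_one_copy pairK pair_clique.
apply/existsP; exists k.
by rewrite -/(transversal x) -/(transversal y) !onek ?inE ?eqxx ?orbT.
Qed.

(* Labelled marches of K, being cliques, are labelled in K /\_w L after
   replacing each vertex by its transversal copy. *)
Lemma transversal_lab m :
  legal_lgraph K -> llab K m <> None ->
  llab (dup_graph K L w) (map transversal m) = llab K m.
Proof.
move=> legalK mdom; have [_ _ _ /(_ m mdom) [_ mK]] := wfK.
have [k onek] := clique_in_one_copy mK (legalK m mdom).
have fst_m : map fst (map transversal m) = m.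
  by rewrite -map_comp (eq_map (g := id)) ?map_id.
rewrite /= fst_m; case: existsP => // -[]; exists k.
by apply/eqP/eq_in_map => x xm; rewrite onek.
Qed.

Variables (V : choiceType) (G2 : lgraph V X) (iota : W * nat -> V).
Hypothesis iso2 : is_iso (dup_graph K L w) G2 iota.

Definition transversal_image : {fset V} := [fset iota (transversal v) | v in lverts K].

Lemma transversal_image_sub : transversal_image `<=` lverts G2.
Proof.
have [_ into2 _ _ _] := iso2.
by apply/fsubsetP => _ /imfsetP [v vK ->]; apply/into2/transversal_vert.
Qed.

Lemma transversal_iso :
  legal_lgraph K -> is_iso K (restrict G2 transversal_image) (iota \o transversal).
Proof.
move=> legalK; have [inj2 _ _ adj2 [lab2 lab2inv]] := iso2.
have imK v : v \in lverts K -> iota (transversal v) \in transversal_image.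
  by move=> vK; apply/imfsetP; exists v.
split => /=.
- move=> x y xK yK /inj2 eqxy.
  by have /(congr1 fst) := eqxy (transversal_vert xK) (transversal_vert yK).
- exact: imK.
- by move=> y /imfsetP [x xK ->]; exists x.
- move=> x y xK yK.
  by rewrite !imK // !andbT adj2 ?transversal_vert // transversal_adj.
split.
- move=> m mdom; have [_ _ _ /(_ m mdom) [_ mK]] := wfK.
  have -> : all (fun a => a \in transversal_image) (map (iota \o transversal) m).
    by apply/allP => _ /mapP [x xm ->]; apply: imK (allP mK x xm).
  by rewrite map_comp lab2 ?transversal_lab.
- move=> m' /=; case: ifP => // m'img /lab2inv [m0 [m0dup em0 m0dom]]; subst m'.
  exists (map fst m0); split.
  + by apply/allP => _ /mapP [a am0 ->]; exact: (dup_vert_inv (allP m0dup a am0)).1.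
  + rewrite -map_comp; apply/eq_in_map => a am0 /=.
    have /imfsetP [v vK eav] : iota a \in transversal_image.
      by apply: (allP m'img); exact: map_f.
    by rewrite (inj2 _ _ (allP m0dup a am0) (transversal_vert vK) eav).
  + by move: m0dom => /=; case: ifP.
Qed.

End TransversalCopy.

(* Every choice of copies yields a member of HH: the transversal copy of G
   is an induced subgraph of G'' isomorphic to G, so CON2 transports phi to
   it and CON1 extends the codomain back to G''. *)
Lemma transversal_hom_in_HH (VH : finType) (E : rel VH) (X : Type)
  (le : X -> X -> Prop) (fH : seq VH -> option X) (V : choiceType)
  (GG : lgraph V X -> Prop) (HH : lgraph V X -> {ffun VH -> V} -> Prop)
  (G : lgraph V X) (phi : {ffun VH -> V}) (L : {fset ({fset V} * {fset V})})
  (w : nat) (s : {ffun L -> 'I_w}) (G'' : lgraph V X) (iota : V * nat -> V) :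
  hereditary_class GG -> consistent E le fH GG HH -> GG G -> HH G phi ->
  indep_coll G L -> (0 < w)%N -> GG G'' -> is_iso (dup_graph G L w) G'' iota ->
  HH G'' [ffun x => iota (transversal G s (phi x))].
Proof.
move=> [hered_wf hered_ind] [_ [con1_ext [con2 _]]] GG_G HH_phi indL w_gt0 GG'' iso.
have [wfG legalG] := hered_wf G GG_G; have [wf'' _] := hered_wf G'' GG''.
have ind_img := restrict_induced (transversal_image_sub s w_gt0 iso).
have GG_img := hered_ind _ _ GG'' (restrict_wf _ wf'') ind_img.
have HH_img := con2 _ _ _ phi GG_G GG_img (transversal_iso wfG indL s w_gt0 iso legalG) HH_phi.
exact: (con1_ext _ _ _ HH_img GG'' ind_img).2.
Qed.

Lemma card_onto_image (T : finType) (V : choiceType) (f : T -> V) (A : {fset V}) :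
  (forall y, y \in A -> exists x, f x = y) -> (#|` A| <= #|T|)%N.
Proof.
move=> onto; apply: leq_trans (fsubset_leq_card (B := [fset y in map f (enum T)]) _) _.
- by apply/fsubsetP => y /onto [x <-]; rewrite inE; apply: map_f; rewrite mem_enum.
- by rewrite card_fseq (leq_trans (size_undup _)) // size_map cardE.
Qed.

Lemma iso_card (V1 V2 : choiceType) (X : Type) (G1 : lgraph V1 X)
  (G2 : lgraph V2 X) (iota : V1 -> V2) :
  is_iso G1 G2 iota -> #|` lverts G2| = #|` lverts G1|.
Proof.
case=> inj into onto _ _.
have -> : lverts G2 = iota @` lverts G1.
  apply/fsetP => y; apply/idP/imfsetP => [/onto [x xG1 <-] | [x xG1 ->]].
  - by exists x.
  - exact: into.
by apply/eqP/card_in_imfsetP.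
Qed.

Section DuplicateSize.
Variables (W : choiceType) (X : Type) (K : lgraph W X).
Variables (L : {fset ({fset W} * {fset W})}) (w : nat).

Lemma dup_card_lower u :
  u \in lverts K -> u \notin dup_core K L -> (w <= #|` lverts (dup_graph K L w)|)%N.
Proof.
move=> uK uC; rewrite cardfE -[w in (w <= _)%N]card_ord.
apply: (@leq_card _ _ (fun k : 'I_w => [` dup_vert L uK (ltn_ord k)])).
by move=> j k /(congr1 val) /(dcopy_inj_index uC) /val_inj.
Qed.

Lemma dup_card_upper : (#|` lverts (dup_graph K L w)| <= #|` lverts K| * w)%N.
Proof.
rewrite -[w in (_ * w)%N]card_ord [#|` lverts K|]cardfE -card_prod.
apply: (card_onto_image (f := fun p => dcopy (dup_core K L) (val p.2) (val p.1))).
move=> a /dup_vert_inv [a1K [k kw ->]].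
by exists ([` a1K], Ordinal kw).
Qed.

End DuplicateSize.

Definition holds (P : Prop) : bool :=
  if excluded_middle_informative P then true else false.

Lemma holdsP (P : Prop) : reflect P (holds P).
Proof. by rewrite /holds; case: excluded_middle_informative => h; constructor. Qed.

Definition maps_into (T : finType) (V : choiceType) (A : {fset V}) : {fset {ffun T -> V}} :=
  [fset [ffun x => val ((g : {ffun T -> A}) x)] | g : {ffun T -> A}].

Lemma maps_intoP (T : finType) (V : choiceType) (A : {fset V}) (phi : {ffun T -> V}) :
  (forall x, phi x \in A) -> phi \in maps_into T A.
Proof.
move=> phiA; apply/imfsetP; exists [ffun x => [` phiA x]] => //.
by apply/ffunP => x; rewrite !ffunE.
Qed.

Lemma card_maps_into (T : finType) (V : choiceType) (A : {fset V}) :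
  (#|` maps_into T A| <= #|` A| ^ #|T|)%N.
Proof.
rewrite [#|` A|]cardfE -card_ffun.
apply: (card_onto_image (f := fun g : {ffun T -> A} => [ffun x => val (g x)])).
by move=> _ /imfsetP [g _ ->]; exists g.
Qed.

Section Counting.
Variables (VH : finType) (E : rel VH) (X : Type) (le : X -> X -> Prop).
Variables (fH : seq VH -> option X) (V : choiceType).
Variables (GG : lgraph V X -> Prop) (HH : lgraph V X -> {ffun VH -> V} -> Prop).
Hypothesis homHH : hom_set E le fH GG HH.

Lemma homs_finite G : exists S : {fset {ffun VH -> V}}, forall phi, phi \in S <-> HH G phi.
Proof.
exists [fset phi in maps_into VH (lverts G) | holds (HH G phi)] => phi.
rewrite !inE; split => [/andP [_ /holdsP] // | HH_phi].
have [_ [phiG _ _]] := homHH HH_phi.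
by rewrite maps_intoP //=; apply/holdsP.
Qed.

Lemma num_homs_bound G k : num_homs HH G k -> (k <= #|` lverts G| ^ #|VH|)%N.
Proof.
move=> [S [HS <-]]; apply: leq_trans (card_maps_into VH (lverts G)).
apply/fsubset_leq_card/fsubsetP => phi /HS HH_phi.
by have [_ [phiG _ _]] := homHH HH_phi; apply: maps_intoP.
Qed.

Lemma ex_val_exists G0 n k0 :
  GG G0 -> #|` lverts G0| = n -> num_homs HH G0 k0 ->
  exists e, ex_val GG HH n e /\ (k0 <= e)%N.
Proof.
move=> GG0 n0 count0.
pose attained k := holds (exists G, [/\ GG G, #|` lverts G| = n & num_homs HH G k]).
have ex_attained : exists k, attained k by exists k0; apply/holdsP; exists G0.
have bounded k : attained k -> (k <= n ^ #|VH|)%N.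
  by move=> /holdsP [G [_ <- countG]]; exact: num_homs_bound countG.
have [e /holdsP [G [GG_G nG countG]] emax] := ex_maxnP ex_attained bounded.
exists e; split; last by apply: emax; apply/holdsP; exists G0.
split; first by exists G.
by move=> G' k GG' nG' count'; apply: emax; apply/holdsP; exists G'.
Qed.

End Counting.

(* Distinct choices of copies give distinct homomorphisms, because every
   private part contains a vertex of the image of the onto map phi; hence
   the duplicated host G'' carries at least w^|L| members of HH. *)
Lemma many_homs_into_duplicate (VH : finType) (E : rel VH) (X : Type)
  (le : X -> X -> Prop) (fH : seq VH -> option X) (V : choiceType)
  (GG : lgraph V X -> Prop) (HH : lgraph V X -> {ffun VH -> V} -> Prop)
  (G : lgraph V X) (phi : {ffun VH -> V}) (L : {fset ({fset V} * {fset V})})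
  (w : nat) (G'' : lgraph V X) (iota : V * nat -> V) (S : {fset {ffun VH -> V}}) :
  hereditary_class GG -> consistent E le fH GG HH -> GG G -> HH G phi ->
  (forall y, y \in lverts G -> exists x, phi x = y) ->
  indep_coll G L -> (0 < w)%N -> GG G'' -> is_iso (dup_graph G L w) G'' iota ->
  (forall psi, psi \in S <-> HH G'' psi) -> (w ^ #|` L| <= #|` S|)%N.
Proof.
move=> hered con GG_G HH_phi onto indL w_gt0 GG'' iso HS.
have [inj2 _ _ _ _] := iso.
pose psi (s : {ffun L -> 'I_w}) := [ffun x => iota (transversal G s (phi x))].
have psiS s : psi s \in S.
  by apply/HS; exact: (transversal_hom_in_HH s hered con GG_G HH_phi indL w_gt0 GG'' iso).
rewrite -[w in (w ^ _)%N]card_ord [#|` L|]cardfE -card_ffun [#|` S|]cardfE.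
apply: (@leq_card _ _ (fun s : {ffun L -> 'I_w} => [` psiS s])).
move=> s s' /(congr1 val) /= psi_eq.
apply/ffunP => P; have [_ /fset0Pn [v vP]] := indL.1 (val P) (fsvalP P).
have vG := part_in_verts indL (fsvalP P) vP; have [x phix] := onto v vG.
have same_copy : iota (transversal G s v) = iota (transversal G s' v).
  by have := congr1 (fun f : {ffun VH -> V} => f x) psi_eq; rewrite !ffunE phix.
have := inj2 _ _ (transversal_vert s w_gt0 vG) (transversal_vert s' w_gt0 vG) same_copy.
move=> /(dcopy_inj_index (part_not_core G (fsvalP P) vP)).
by rewrite !(copy_index_part indL _ vP) => /val_inj.
Qed.

(* An independent collection of separations of H has at most |V(H)| members:
   its private parts are pairwise disjoint and nonempty. *)
Lemma H_indep_coll_card (VH : finType) (E : rel VH) (L : {set ({set VH} * {set VH})}) :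
  H_indep_coll E L -> (#|L| <= #|VH|)%N.
Proof.
move=> [sepL indL]; case: (set_0Vmem L) => [-> | [AB0 AB0L]]; first by rewrite cards0.
have [_ /set0Pn [x0 _]] := sepL AB0 AB0L.
pose witness (AB : {set VH} * {set VH}) := odflt x0 [pick x in AB.1 :\: AB.2].
have witnessP AB : AB \in L -> witness AB \in AB.1 :\: AB.2.
  move=> ABL; rewrite /witness; case: pickP => [x -> // | none].
  by have [_ /set0Pn [y]] := sepL AB ABL; rewrite none.
rewrite -(card_in_imset (f := witness)); first exact: max_card.
move=> AB CD ABL CDL same; apply/eqP/negPn/negP => neqABCD.
have [AB_CD _] := indL AB CD ABL CDL neqABCD.
have := witnessP AB ABL; have := witnessP CD CDL; rewrite -same !inE.
by move=> /andP [notCD _] /andP [_ /(subsetP AB_CD)]; rewrite (negbTE notCD).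
Qed.

Lemma duplicate_host (VH : finType) (E : rel VH) (X : Type)
  (le : X -> X -> Prop) (fH : seq VH -> option X) (V : choiceType)
  (GG : lgraph V X -> Prop) (HH : lgraph V X -> {ffun VH -> V} -> Prop)
  (G : lgraph V X) (phi : {ffun VH -> V}) (L : {fset ({fset V} * {fset V})}) N :
  hereditary_class GG -> hom_set E le fH GG HH -> consistent E le fH GG HH ->
  (0 < #|VH|)%N -> HH G phi -> (forall y, y \in lverts G -> exists x, phi x = y) ->
  indep_coll G L -> G_duplicable GG G L ->
  exists n w e, [/\ (N < n)%N, (n <= w * #|VH|)%N, ex_val GG HH n e
                  & (w ^ #|` L| <= e)%N].
Proof.
move=> hered homHH con VH_gt0 HH_phi onto indL dupL.
have [w [Nw [G'' [iota [GG'' iso]]]]] := dupL N.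
have w_gt0 : (0 < w)%N by apply: leq_ltn_trans Nw.
have [GG_G [phiG _ _]] := homHH _ _ HH_phi.
have [S HS] := homs_finite homHH G''.
have [e [exv Se]] := ex_val_exists homHH GG'' erefl (ex_intro _ S (conj HS erefl)).
exists #|` lverts G''|, w, e; split => //.
- rewrite (iso_card iso); have [x0 _] := card_gt0P VH_gt0.
  have G_nonempty : lverts G != fset0 by apply/fset0Pn; exists (phi x0).
  have [u uG uC] := exists_noncore indL G_nonempty.
  exact: leq_trans Nw (dup_card_lower w uG uC).
- rewrite (iso_card iso); apply: leq_trans (dup_card_upper G L w) _.
  by rewrite mulnC leq_mul2l (card_onto_image onto) orbT.
- apply: leq_trans Se.
  exact: many_homs_into_duplicate hered con GG_G HH_phi onto indL w_gt0 GG'' iso HS.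
Qed.

Lemma power_count_bound (n w e d M : nat) :
  (0 < M)%N -> (n <= w * M)%N -> (w ^ d <= e)%N -> (d <= M)%N ->
  (n ^ d <= e * M ^ M)%N.
Proof.
move=> M_gt0 nwM we dM; apply: (@leq_trans ((w * M) ^ d)).
  by case: d {we dM} => // d; rewrite leq_exp2r.
by rewrite expnMn; apply: leq_mul => //; exact: leq_pexp2l.
Qed.

Lemma INR_expn (n d : nat) : INR (n ^ d) = pow (INR n) d.
Proof. by elim: d => [|d IH] //; rewrite expnS mult_INR IH. Qed.

Lemma scaled_power_le (n d e K : nat) :
  (0 < K)%N -> (n ^ d <= e * K)%N -> Rle (Rmult (Rinv (INR K)) (pow (INR n) d)) (INR e).
Proof.
move=> K_gt0 ndeK; have K_pos : Rlt R0 (INR K) by apply/lt_0_INR/ltP.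
apply: (Rmult_le_reg_l (INR K)) => //.
rewrite -Rmult_assoc Rinv_r; last exact: Rgt_not_eq.
rewrite Rmult_1_l -INR_expn -mult_INR; by apply/le_INR/leP; rewrite multE mulnC.
Qed.

Theorem mainTheorem1 (VH : finType) (E : rel VH) :
  simple_graph E -> (0 < #|VH|)%N ->
  exists c : R, Rlt R0 c /\
  forall (X : Type) (le : X -> X -> Prop) (fH : seq VH -> option X)
         (V : choiceType) (GG : lgraph V X -> Prop)
         (HH : lgraph V X -> {ffun VH -> V} -> Prop),
    quasi_order le ->
    legal_H_labelling E fH ->
    hereditary_class GG ->
    hom_set E le fH GG HH ->
    consistent E le fH GG HH ->
    forall d : nat, is_dup E GG HH d ->
    forall N : nat, exists n : nat, (N < n)%N /\
      exists e : nat, ex_val GG HH n e /\ Rle (Rmult c (pow (INR n) d)) (INR e).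
Proof.
move=> _ VH_gt0; set M := #|VH|.
have MM_gt0 : (0 < M ^ M)%N by rewrite expn_gt0 VH_gt0.
exists (Rinv (INR (M ^ M))); split; first by apply/Rinv_0_lt_compat/lt_0_INR/ltP.
move=> X le fH V GG HH _ _ hered homHH con d [[L [indL dupL cardL]] _] N.
have d_le : (d <= M)%N by rewrite -cardL; exact: H_indep_coll_card indL.
have [G [phi [HH_phi onto _ indL' [cardL' dupL']]]] := dupL.
have [n [w [e [Nn nwM exv we]]]] :=
  duplicate_host N hered homHH con VH_gt0 HH_phi onto indL' dupL'.
rewrite cardL' cardL in we.
exists n; split => //; exists e; split => //.
exact: scaled_power_le MM_gt0 (power_count_bound VH_gt0 nwM we d_le).
Qed.
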